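(* Let $T$ be a commutative monad on a cartesian monoidal category $\mathbb{C}$, let $R$ be a monoid in $\mathbb{C}$, and let $S=TR$ with its induced monoid structure and algebra structure $\mu_R:TS\to S$. If for every object $X$ the family of morphisms $\mu_R\circ T(\varepsilon_{h_1}\cdots\varepsilon_{h_n}):TTX\to S$, over all $n\in\mathbb{N}$ and all $h_1,\dots,h_n:X\to S$, is jointly monic, then $T$ is $R$-observational (and hence observational).
   Context: $T=(T,\eta,\mu)$ with monoidal structure $\nabla_{A,B}:TA\times TB\to T(A\times B)$. $R$ has unit $e^R:1\to R$ and multiplication $m^R:R\times R\to R$; $S=TR$ is a monoid with unit $e^S=Te^R\circ\eta_1$ and multiplication $m^S=Tm^R\circ\nabla_{R,R}$; $m^S_n:S^n\to S$ is the $n$-fold multiplication ($m^S_0=e^S$, $m^S_1=1$). For $h:X\to S$, $\varepsilon_h=\mu_R\circ Th:TX\to S$. For $k_1,\dots,k_n:Y\to S$, the pointwise product is $k_1\cdots k_n=m^S_n\circ(k_1\times\cdots\times k_n)\circ\Delta_n:Y\to S$, $\Delta_n$ the $n$-fold diagonal. $\mathsf{Kl}(T)$: morphisms $f:A\rightsquigarrow B$ correspond to $f^\sharp:A\to TB$, composition $(g\circledcirc f)^\sharp=\mu\circ T(g^\sharp)\circ f^\sharp$, tensor $\otimes$ is $\times$ on objects with $(f\otimes g)^\sharp=\nabla\circ(f^\sharp\times g^\sharp)$; $h^\flat$ is the Kleisli morphism corresponding to $h$. $\mathsf{force}_A^\sharp=1_{TA}$, $\mathsf{copy}_n^\sharp=\eta\circ\Delta_n:TX\to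 T((TX)^n)$, $\mathsf{samp}_n=\mathsf{force}^{\otimes n}\circledcirc\mathsf{copy}_n:TX\rightsquigarrow X^{\otimes n}$. $T$ is $R$-observational if for each $X$ the family $(h_1^\flat\otimes\cdots\otimes h_n^\flat)\circledcirc\mathsf{samp}_n:TX\rightsquigarrow R^{\otimes n}$, over $n\in\mathbb{N}$ and $h_1,\dots,h_n:X\to TR$, is jointly monic in $\mathsf{Kl}(T)$; $T$ is observational if for each $X$ the family $(\mathsf{samp}_n)_{n\in\mathbb{N}}$ is jointly monic in $\mathsf{Kl}(T)$. *)

From Stdlib Require Import List.
Import ListNotations.
Set Implicit Arguments.
Unset Strict Implicit.

Record Category := {
  ob :> Type;
  hom : ob -> ob -> Type;
  idm : forall A, hom A A;
  comp : forall A B C, hom B C -> hom A B -> hom A C;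
  comp_id_l : forall A B (f : hom A B), comp (idm B) f = f;
  comp_id_r : forall A B (f : hom A B), comp f (idm A) = f;
  comp_assoc : forall A B C D (h : hom C D) (g : hom B C) (f : hom A B),
      comp h (comp g f) = comp (comp h g) f
}.
Arguments idm {c} A.
Arguments comp {c A B C} _ _.
Arguments hom {c} _ _.

Declare Scope cat_scope.
Notation "g ∘ f" := (comp g f) (at level 40, left associativity) : cat_scope.
Open Scope cat_scope.

Record Cartesian (C : Category) := {
  one : C;
  bang : forall A : C, hom A one;
  bang_unique : forall A (f : hom A one), f = bang A;
  prod : C -> C -> C;
  p1 : forall A B, hom (prod A B) A;
  p2 : forall A B, hom (prod A B) B;
  pair : forall X A B, hom X A -> hom X B -> hom X (prod A B);
  p1_pair : forall X A B (f : hom X A) (g : hom X B), p1 A B ∘ pair f g = f;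
  p2_pair : forall X A B (f : hom X A) (g : hom X B), p2 A B ∘ pair f g = g;
  pair_unique : forall X A B (f : hom X A) (g : hom X B) (h : hom X (prod A B)),
      p1 A B ∘ h = f -> p2 A B ∘ h = g -> h = pair f g
}.
Arguments one {C} c.
Arguments bang {C} c A.
Arguments prod {C} c _ _.
Arguments p1 {C} c A B.
Arguments p2 {C} c A B.
Arguments pair {C} c {X A B} _ _.

Section CartOps.
Context {C : Category} (c : Cartesian C).
Local Notation "A × B" := (prod c A B) (at level 30).
Definition pmap {A A' B B'} (f : hom A A') (g : hom B B') : hom (A × B) (A' × B') :=
  pair c (f ∘ p1 c A B) (g ∘ p2 c A B).
Definition swap (A B : C) : hom (A × B) (B × A) := pair c (p2 c A B) (p1 c A B).
Definition assoc (A B D : C) : hom ((A × B) × D) (A × (B × D)) :=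
  pair c (p1 c A B ∘ p1 c (A × B) D)
         (pair c (p2 c A B ∘ p1 c (A × B) D) (p2 c (A × B) D)).
Fixpoint pow (X : C) (n : nat) : C :=
  match n with O => one c | S k => X × pow X k end.
Fixpoint diag (X : C) (n : nat) : hom X (pow X n) :=
  match n with O => bang c X | S k => pair c (idm X) (diag X k) end.
End CartOps.

Record Monad (C : Category) := {
  Tob : C -> C;
  Tmap : forall A B, hom A B -> hom (Tob A) (Tob B);
  Tmap_id : forall A, Tmap (idm A) = idm (Tob A);
  Tmap_comp : forall A B D (g : hom B D) (f : hom A B),
      Tmap (g ∘ f) = Tmap g ∘ Tmap f;
  eta : forall A, hom A (Tob A);
  mu : forall A, hom (Tob (Tob A)) (Tob A);
  eta_nat : forall A B (f : hom A B), Tmap f ∘ eta A = eta B ∘ f;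
  mu_nat : forall A B (f : hom A B), Tmap f ∘ mu A = mu B ∘ Tmap (Tmap f);
  mu_eta_l : forall A, mu A ∘ eta (Tob A) = idm (Tob A);
  mu_eta_r : forall A, mu A ∘ Tmap (eta A) = idm (Tob A);
  mu_assoc : forall A, mu A ∘ Tmap (mu A) = mu A ∘ mu (Tob A)
}.
Arguments Tob {C} m _.
Arguments Tmap {C} m {A B} _.
Arguments eta {C} m A.
Arguments mu {C} m A.

Record Strength {C : Category} (c : Cartesian C) (T : Monad C) := {
  st : forall A B, hom (prod c A (Tob T B)) (Tob T (prod c A B));
  st_nat : forall A A' B B' (f : hom A A') (g : hom B B'),
      st A' B' ∘ pmap c f (Tmap T g) = Tmap T (pmap c f g) ∘ st A B;
  st_unit : forall B, Tmap T (p2 c (one c) B) ∘ st (one c) B = p2 c (one c) (Tob T B);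
  st_assoc : forall A B D,
      Tmap T (assoc c A B D) ∘ st (prod c A B) D
      = st A (prod c B D) ∘ pmap c (idm A) (st B D) ∘ assoc c A B (Tob T D);
  st_eta : forall A B, st A B ∘ pmap c (idm A) (eta T B) = eta T (prod c A B);
  st_mu : forall A B, st A B ∘ pmap c (idm A) (mu T B)
                      = mu T (prod c A B) ∘ Tmap T (st A B) ∘ st A (Tob T B)
}.
Arguments st {C c T} s A B.

Section Strong.
Context {C : Category} {c : Cartesian C} {T : Monad C} (s : Strength c T).
Definition cost (A B : C) : hom (prod c (Tob T A) B) (Tob T (prod c A B)) :=
  Tmap T (swap c B A) ∘ st s B A ∘ swap c (Tob T A) B.
Definition dstr_l (A B : C) : hom (prod c (Tob T A) (Tob T B)) (Tob T (prod c A B)) :=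
  mu T (prod c A B) ∘ Tmap T (st s A B) ∘ cost A (Tob T B).
Definition dstr_r (A B : C) : hom (prod c (Tob T A) (Tob T B)) (Tob T (prod c A B)) :=
  mu T (prod c A B) ∘ Tmap T (cost A B) ∘ st s (Tob T A) B.
End Strong.

Definition commutative {C : Category} {c : Cartesian C} {T : Monad C}
  (s : Strength c T) : Prop :=
  forall A B, dstr_l s A B = dstr_r s A B.

Definition nabla {C : Category} {c : Cartesian C} {T : Monad C}
  (s : Strength c T) (A B : C) := dstr_l s A B.

Record Monoid {C : Category} (c : Cartesian C) := {
  mcar : C;
  munit : hom (one c) mcar;
  mmul : hom (prod c mcar mcar) mcar;
  mmul_assoc : mmul ∘ pmap c mmul (idm mcar)
               = mmul ∘ pmap c (idm mcar) mmul ∘ assoc c mcar mcar mcar;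
  mmul_unit_l : mmul ∘ pair c (munit ∘ bang c mcar) (idm mcar) = idm mcar;
  mmul_unit_r : mmul ∘ pair c (idm mcar) (munit ∘ bang c mcar) = idm mcar
}.
Arguments mcar {C c} m.
Arguments munit {C c} m.
Arguments mmul {C c} m.

Section Observ.
Context {C : Category} {c : Cartesian C} {T : Monad C} (s : Strength c T)
        (R : Monoid c).

Definition S_ob : C := Tob T (mcar R).
Definition eS : hom (one c) S_ob := Tmap T (munit R) ∘ eta T (one c).
Definition mS : hom (prod c S_ob S_ob) S_ob :=
  Tmap T (mmul R) ∘ nabla s (mcar R) (mcar R).

Definition eps {X : C} (h : hom X S_ob) : hom (Tob T X) S_ob :=
  mu T (mcar R) ∘ Tmap T h.

(* pointwise product k_1 ⋯ k_n = m^S_n ∘ (k_1 × ⋯ × k_n) ∘ Δ_n,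
   with m^S_0 = e^S and m^S_{n+1} = m^S ∘ (1 × m^S_n) *)
Fixpoint pwprod {Y : C} (ks : list (hom Y S_ob)) : hom Y S_ob :=
  match ks with
  | [] => eS ∘ bang c Y
  | k :: ks' => mS ∘ pair c k (pwprod ks')
  end.

(* Kleisli morphisms A ⇝ B are represented by their transposes A -> TB. *)
Definition kcomp {A B D : C} (g : hom B (Tob T D)) (f : hom A (Tob T B))
  : hom A (Tob T D) := mu T D ∘ Tmap T g ∘ f.

(* n-fold Kleisli tensor f_1 ⊗ ⋯ ⊗ f_n of maps f_i : A ⇝ B (all same type),
   (f ⊗ g)^♯ = ∇ ∘ (f^♯ × g^♯), empty tensor = η_1 *)
Fixpoint ktensor {A B : C} (fs : list (hom A (Tob T B)))
  : hom (pow c A (length fs)) (Tob T (pow c B (length fs))) :=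
  match fs with
  | [] => eta T (one c)
  | f :: fs' => nabla s B (pow c B (length fs')) ∘ pmap c f (ktensor fs')
  end.

(* force^{⊗ n} : (TX)^n ⇝ X^n, with force^♯ = 1_{TX}:
   (force ⊗ force^{⊗ k})^♯ = ∇ ∘ (1 × (force^{⊗ k})^♯) *)
Fixpoint forcen (X : C) (n : nat) :
  hom (pow c (Tob T X) n) (Tob T (pow c X n)) :=
  match n with
  | O => eta T (one c)
  | S k => nabla s X (pow c X k) ∘ pmap c (idm (Tob T X)) (forcen X k)
  end.

Definition copyn (X : C) (n : nat) : hom (Tob T X) (Tob T (pow c (Tob T X) n)) :=
  eta T _ ∘ diag c (Tob T X) n.

Definition sampn (X : C) (n : nat) : hom (Tob T X) (Tob T (pow c X n)) :=
  kcomp (forcen X n) (copyn X n).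

Definition kl_jointly_monic {I : Type} {A : C} (B : I -> C)
  (f : forall i, hom A (Tob T (B i))) : Prop :=
  forall (Y : C) (g1 g2 : hom Y (Tob T A)),
    (forall i, kcomp (f i) g1 = kcomp (f i) g2) -> g1 = g2.

Definition jointly_monic {I : Type} {A : C} (B : I -> C)
  (f : forall i, hom A (B i)) : Prop :=
  forall (Y : C) (g1 g2 : hom Y A),
    (forall i, f i ∘ g1 = f i ∘ g2) -> g1 = g2.

(* T is R-observational: for each X, the family
   (h_1^♭ ⊗ ⋯ ⊗ h_n^♭) ⊚ samp_n : TX ⇝ R^{⊗ n}, n ∈ ℕ, h_i : X -> TR,
   is jointly monic in Kl(T) (lists hs encode n = length hs and h_1..h_n) *)
Definition R_observational : Prop :=
  forall X : C,
    kl_jointly_monic (B := fun hs : list (hom X (Tob T (mcar R))) => pow c (mcar R) (length hs))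
      (fun hs => kcomp (ktensor hs) (sampn X (length hs))).

End Observ.

Definition observational {C : Category} {c : Cartesian C} {T : Monad C}
  (s : Strength c T) : Prop :=
  forall X : C, kl_jointly_monic (T := T) (B := fun n : nat => pow c X n) (fun n => sampn s X n).

From Stdlib Require Import List.
Import ListNotations.

(* For a commutative monad, ∇ is compatible with μ, so the n-fold pointwise
   product ε_{h_1} ⋯ ε_{h_n} : TX -> S factors as T(m^R_n) ∘ Φ, where
   Φ = (h_1^♭ ⊗ ⋯ ⊗ h_n^♭) ⊚ samp_n.  Hence μ_R ∘ T(ε_{h_1} ⋯ ε_{h_n}) ∘ g
   = T(m^R_n) ∘ (Φ ⊚ g), so maps separated by the hypothesised jointly monic
   family are already separated by the Φ's: T is R-observational.  Each Φ
   factors through samp_n in Kl(T), so T is also observational. *)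

Ltac assoc_r := repeat rewrite <- comp_assoc.

Lemma comp_eq_precomp {C : Category} {A B B' D : C}
  {a : hom B D} {b : hom A B} {a' : hom B' D} {b' : hom A B'} :
  a ∘ b = a' ∘ b' -> forall X (k : hom X A), a ∘ (b ∘ k) = a' ∘ (b' ∘ k).
Proof. intros E X k. rewrite !comp_assoc, E. reflexivity. Qed.

Lemma comp_id_precomp {C : Category} {A B : C} {a : hom B A} {b : hom A B} :
  a ∘ b = idm A -> forall X (k : hom X A), a ∘ (b ∘ k) = k.
Proof. intros E X k. rewrite comp_assoc, E, comp_id_l. reflexivity. Qed.

(* Rewrite, in either direction, with an equation [a ∘ b = a' ∘ b'] inside a
   right-associated chain [a ∘ (b ∘ k)]. *)
Ltac rewrite_r E :=
  first [rewrite (comp_eq_precomp E) | rewrite (comp_id_precomp E) | rewrite E].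
Ltac rewrite_l E := first [rewrite <- (comp_eq_precomp E) | rewrite <- E].

Section Products.
Context {C : Category} (c : Cartesian C).

Lemma pair_comp {X Y A B : C} (f : hom Y A) (g : hom Y B) (h : hom X Y) :
  pair c f g ∘ h = pair c (f ∘ h) (g ∘ h).
Proof.
  apply pair_unique; rewrite comp_assoc; [rewrite p1_pair | rewrite p2_pair];
    reflexivity.
Qed.

Lemma pair_p1_p2 {A B : C} : pair c (p1 c A B) (p2 c A B) = idm _.
Proof. symmetry; apply pair_unique; apply comp_id_r. Qed.

Lemma pmap_pair {X A A' B B' : C} (f : hom A A') (g : hom B B')
  (a : hom X A) (b : hom X B) :
  pmap c f g ∘ pair c a b = pair c (f ∘ a) (g ∘ b).
Proof.
  unfold pmap. rewrite pair_comp. assoc_r. rewrite p1_pair, p2_pair. reflexivity.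
Qed.

Lemma pmap_comp {A A' A'' B B' B'' : C} (f : hom A' A'') (g : hom B' B'')
  (f' : hom A A') (g' : hom B B') :
  pmap c f g ∘ pmap c f' g' = pmap c (f ∘ f') (g ∘ g').
Proof. unfold pmap at 2. rewrite pmap_pair. unfold pmap. assoc_r. reflexivity. Qed.

Lemma swap_pair {X A B : C} (a : hom X A) (b : hom X B) :
  swap c A B ∘ pair c a b = pair c b a.
Proof. unfold swap. rewrite pair_comp, p1_pair, p2_pair. reflexivity. Qed.

Lemma swapK {A B : C} : swap c B A ∘ swap c A B = idm _.
Proof. unfold swap at 2. rewrite swap_pair. apply pair_p1_p2. Qed.

Lemma swap_pmap {A A' B B' : C} (f : hom A A') (g : hom B B') :
  swap c A' B' ∘ pmap c f g = pmap c g f ∘ swap c A B.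
Proof.
  unfold pmap at 1. rewrite swap_pair. unfold swap. rewrite pmap_pair. reflexivity.
Qed.

End Products.

Section StrongMonad.
Context {C : Category} {c : Cartesian C} {T : Monad C} (s : Strength c T).

Lemma Tmap_comp_precomp {A B D : C} (g : hom B D) (f : hom A B) X (k : hom X _) :
  Tmap T g ∘ (Tmap T f ∘ k) = Tmap T (g ∘ f) ∘ k.
Proof. rewrite Tmap_comp, comp_assoc. reflexivity. Qed.

Lemma cost_nat {A A' B B' : C} (f : hom A A') (g : hom B B') :
  cost s A' B' ∘ pmap c (Tmap T f) g = Tmap T (pmap c f g) ∘ cost s A B.
Proof.
  unfold cost. assoc_r. rewrite swap_pmap. rewrite_r (st_nat s g f).
  rewrite Tmap_comp_precomp, swap_pmap, Tmap_comp. assoc_r. reflexivity.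
Qed.

Lemma cost_mu {A B : C} :
  cost s A B ∘ pmap c (mu T A) (idm B)
  = mu T _ ∘ Tmap T (cost s A B) ∘ cost s (Tob T A) B.
Proof.
  unfold cost. assoc_r. rewrite swap_pmap. rewrite_r (st_mu s B A).
  rewrite !Tmap_comp. assoc_r. rewrite_r (mu_nat T (swap c B A)).
  rewrite_r (Tmap_comp_precomp (swap c (Tob T A) B) (swap c B (Tob T A))).
  rewrite swapK, Tmap_id, comp_id_l. reflexivity.
Qed.

Lemma nabla_nat {A A' B B' : C} (f : hom A A') (g : hom B B') :
  nabla s A' B' ∘ pmap c (Tmap T f) (Tmap T g) = Tmap T (pmap c f g) ∘ nabla s A B.
Proof.
  unfold nabla, dstr_l. assoc_r. rewrite cost_nat.
  rewrite_r (Tmap_comp_precomp (st s A' B') (pmap c f (Tmap T g))).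
  rewrite st_nat, Tmap_comp. assoc_r. rewrite_r (mu_nat T (pmap c f g)). reflexivity.
Qed.

Lemma nabla_mu_l {A B : C} :
  nabla s A B ∘ pmap c (mu T A) (idm _)
  = mu T _ ∘ Tmap T (nabla s A B) ∘ cost s (Tob T A) (Tob T B).
Proof.
  unfold nabla, dstr_l. assoc_r. rewrite cost_mu. assoc_r.
  rewrite_r (mu_nat T (st s A B)). rewrite_l (mu_assoc T (prod c A B)).
  rewrite !Tmap_comp. assoc_r. reflexivity.
Qed.

(* The right-hand analogue goes through the other double strength, hence
   needs commutativity. *)
Lemma nabla_mu_r (Tcomm : commutative s) {A B : C} :
  nabla s A B ∘ pmap c (idm _) (mu T B)
  = mu T _ ∘ Tmap T (nabla s A B) ∘ st s (Tob T A) (Tob T B).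
Proof.
  unfold nabla. rewrite !Tcomm. unfold dstr_r. assoc_r. rewrite st_mu. assoc_r.
  rewrite_r (mu_nat T (cost s A B)). rewrite_l (mu_assoc T (prod c A B)).
  rewrite !Tmap_comp. assoc_r. reflexivity.
Qed.

Lemma nabla_mu (Tcomm : commutative s) {A B : C} :
  mu T _ ∘ Tmap T (nabla s A B) ∘ nabla s (Tob T A) (Tob T B)
  = nabla s A B ∘ pmap c (mu T A) (mu T B).
Proof.
  assert (Hsplit : pmap c (mu T A) (mu T B)
                   = pmap c (mu T A) (idm _) ∘ pmap c (idm _) (mu T B)).
  { rewrite pmap_comp, comp_id_l, comp_id_r. reflexivity. }
  rewrite Hsplit, comp_assoc, nabla_mu_l. assoc_r.
  rewrite <- (Tmap_id T (Tob T A)), cost_nat.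
  rewrite_r (Tmap_comp_precomp (nabla s A B) (pmap c (idm (Tob T A)) (mu T B))).
  rewrite (nabla_mu_r Tcomm), !Tmap_comp. assoc_r.
  rewrite_r (mu_assoc T (prod c A B)). rewrite_l (mu_nat T (nabla s A B)).
  unfold nabla, dstr_l. assoc_r. reflexivity.
Qed.

End StrongMonad.

Section Kleisli.
Context {C : Category} {T : Monad C}.

Lemma kcomp_assoc {A B D E : C} (f : hom D (Tob T E)) (g : hom B (Tob T D))
  (h : hom A (Tob T B)) :
  kcomp (kcomp f g) h = kcomp f (kcomp g h).
Proof.
  unfold kcomp. rewrite !Tmap_comp. assoc_r.
  rewrite_r (mu_assoc T E). rewrite_l (mu_nat T f). reflexivity.
Qed.

Lemma mu_Tmap_postcomp {A B D Y : C} (m : hom B D) (f : hom A (Tob T B))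
  (g : hom Y (Tob T A)) :
  mu T D ∘ Tmap T (Tmap T m ∘ f) ∘ g = Tmap T m ∘ kcomp f g.
Proof.
  unfold kcomp. rewrite Tmap_comp. assoc_r. rewrite_l (mu_nat T m). reflexivity.
Qed.

Lemma kl_jointly_monic_of_postcomp {I : Type} {A : C} {B : I -> C} (D : I -> C)
  {f : forall i, hom A (Tob T (B i))} (m : forall i, hom (B i) (D i)) :
  jointly_monic (B := fun i => Tob T (D i))
    (fun i => mu T (D i) ∘ Tmap T (Tmap T (m i) ∘ f i)) ->
  kl_jointly_monic f.
Proof.
  intros Hmono Y g1 g2 Hkl. apply Hmono. intros i.
  rewrite !mu_Tmap_postcomp, Hkl. reflexivity.
Qed.

Lemma kl_jointly_monic_of_factor {I J : Type} {A : C} {B : J -> C} {D : I -> C}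
  {g : forall j, hom A (Tob T (B j))} (idx : I -> J)
  {k : forall i, hom (B (idx i)) (Tob T (D i))} :
  kl_jointly_monic (fun i => kcomp (k i) (g (idx i))) -> kl_jointly_monic g.
Proof.
  intros Hmono Y g1 g2 Hg. apply Hmono. intros i.
  rewrite !kcomp_assoc, Hg. reflexivity.
Qed.

End Kleisli.

Section PointwiseProduct.
Context {C : Category} {c : Cartesian C} {T : Monad C} (s : Strength c T)
  (Tcomm : commutative s) (R : Monoid c).

Fixpoint mmul_n (n : nat) : hom (pow c (mcar R) n) (mcar R) :=
  match n with
  | O => munit R
  | S k => mmul R ∘ pmap c (idm _) (mmul_n k)
  end.

Lemma sampn_diag (X : C) (n : nat) :
  sampn s X n = forcen s X n ∘ diag c (Tob T X) n.
Proof.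
  unfold sampn, kcomp, copyn. assoc_r. rewrite_r (eta_nat T (forcen s X n)).
  rewrite comp_assoc, mu_eta_l, comp_id_l. reflexivity.
Qed.

Lemma ktensor_sampn_nil (X : C) :
  kcomp (ktensor s (B := mcar R) []) (sampn s X 0) = eta T _ ∘ bang c (Tob T X).
Proof.
  rewrite sampn_diag. unfold kcomp. simpl. assoc_r.
  rewrite_r (eta_nat T (eta T (one c))). rewrite_r (mu_eta_l T (one c)). reflexivity.
Qed.

Lemma ktensor_sampn_cons {X : C} (h : hom X (S_ob (T := T) R)) hs :
  kcomp (ktensor s (h :: hs)) (sampn s X (length (h :: hs)))
  = nabla s _ _ ∘ pair c (eps h) (kcomp (ktensor s hs) (sampn s X (length hs))).
Proof.
  rewrite !sampn_diag. unfold kcomp. simpl. rewrite !Tmap_comp. assoc_r.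
  rewrite (pmap_pair c). rewrite_l (nabla_nat s h (ktensor s hs)). unfold S_ob.
  rewrite !comp_assoc, (nabla_mu s Tcomm). assoc_r.
  rewrite (comp_assoc (pmap c _ _)), (pmap_comp c), (pmap_pair c), !comp_id_r.
  unfold eps. assoc_r. reflexivity.
Qed.

Lemma pwprod_eps {X : C} (hs : list (hom X (S_ob (T := T) R))) :
  pwprod s (map (eps (R := R)) hs)
  = Tmap T (mmul_n (length hs)) ∘ kcomp (ktensor s hs) (sampn s X (length hs)).
Proof.
  induction hs as [|h hs IH].
  - rewrite ktensor_sampn_nil. simpl. unfold eS. assoc_r.
    rewrite_r (eta_nat T (munit R)). reflexivity.
  - rewrite ktensor_sampn_cons. simpl. rewrite IH. unfold mS.
    rewrite !Tmap_comp. assoc_r.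
    rewrite_l (nabla_nat s (idm (mcar R)) (mmul_n (length hs))).
    rewrite (pmap_pair c), Tmap_id, comp_id_l. reflexivity.
Qed.

End PointwiseProduct.

Theorem lemma6p6 (C : Category) (c : Cartesian C) (T : Monad C)
  (s : Strength c T) (Tcomm : commutative s) (R : Monoid c) :
  (forall X : C,
     jointly_monic (I := list (hom X (S_ob (T := T) R)))
       (B := fun _ => S_ob (T := T) R)
       (fun hs => mu T (mcar R)
                  ∘ Tmap T (pwprod s (map (eps (T := T) (R := R)) hs)))) ->
  R_observational s R /\ observational s.
Proof.
  intros Hmono.
  assert (Robs : R_observational s R).
  { intros X.
    apply (kl_jointly_monic_of_postcomp (fun _ => mcar R)
             (fun hs => mmul_n R (length hs))).
    intros Y g1 g2 Heq. apply (Hmono X Y g1 g2). intros hs.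
    rewrite (pwprod_eps s Tcomm). exact (Heq hs). }
  split; [exact Robs |].
  intros X. exact (kl_jointly_monic_of_factor (@length _) (Robs X)).
Qed.
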